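(* For each $i=1,\dots,n$, the function $x\mapsto W^{z^\ast}(x,c_i)$ is continuously differentiable on $(0,\infty)$. Moreover, if $z^\ast(c_i)>0$, then the right second derivative at $z^\ast(c_i)$ is at least the left one: $\partial_{xx}W^{z^\ast}(z^\ast(c_i)^+,c_i)\ge\partial_{xx}W^{z^\ast}(z^\ast(c_i)^-,c_i)$.
   Context: Let $\mu\in\mathbb R$, $\sigma>0$, $q>0$, $\Lambda>0$ and $S=\{c_0,c_1,\dots,c_n\}$ with $0=c_0<c_1<\dots<c_n$. For $c\ge0$, $\theta_1(c)=\frac{c-\mu-\sqrt{(c-\mu)^2+2q\sigma^2}}{\sigma^2}<0$. Define recursively $W^{z^\ast}(x,c_0)=\frac{\Lambda}{q}(1-e^{\theta_1(0)x})$ for $x\ge0$, and for $i\ge1$: $G_i(y)=\Big(1-\frac{q}{c_i+\Lambda}W^{z^\ast}(y,c_{i-1})\Big)e^{-\theta_1(c_i)y}$ for $y\ge0$, $z^\ast(c_i)=\min\big(\arg\min_{y\ge0}G_i(y)\big)$, $a^\ast(c_i)=G_i(z^\ast(c_i))$, and $W^{z^\ast}(x,c_i)=W^{z^\ast}(x,c_{i-1})$ for $0\le x\le z^\ast(c_i)$, $W^{z^\ast}(x,c_i)=\frac{c_i+\Lambda}{q}\big(1-a^\ast(c_i)e^{\theta_1(c_i)x}\big)$ for $x>z^\ast(c_i)$. (This is the value of the optimal multi-threshold emission strategy.) *)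

From Stdlib Require Import Reals.
From Coquelicot Require Import Coquelicot.
Open Scope R_scope.

Definition theta1 (mu sigma q c : R) : R :=
  (c - mu - sqrt ((c - mu) ^ 2 + 2 * q * sigma ^ 2)) / sigma ^ 2.

Definition Gfun (mu sigma q Lambda : R) (Wprev : R -> R) (ci : R) (y : R) : R :=
  (1 - q / (ci + Lambda) * Wprev y) * exp (- theta1 mu sigma q ci * y).

Definition argmin_set (G : R -> R) (y : R) : Prop :=
  0 <= y /\ (forall y', 0 <= y' -> G y <= G y').

(* min (argmin_{y>=0} G): the infimum of the set of minimisers (it is the
   minimum whenever the argmin set is nonempty and closed, e.g. G continuous). *)
Definition argmin_min (G : R -> R) : R := real (Glb_Rbar (argmin_set G)).

(* W^{z*}(., c_i), with c : nat -> R encoding S = {c_0,...,c_n} *)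
Fixpoint Wz (mu sigma q Lambda : R) (c : nat -> R) (i : nat) : R -> R :=
  match i with
  | O => fun x => Lambda / q * (1 - exp (theta1 mu sigma q 0 * x))
  | S j =>
      let Wprev := Wz mu sigma q Lambda c j in
      let G := Gfun mu sigma q Lambda Wprev (c (S j)) in
      let z := argmin_min G in
      let a := G z in
      fun x => if Rle_dec x z then Wprev x
               else (c (S j) + Lambda) / q * (1 - a * exp (theta1 mu sigma q (c (S j)) * x))
  end.

(* z*(c_i) for i >= 1 (value at i = 0 is an irrelevant default 0) *)
Definition zstar (mu sigma q Lambda : R) (c : nat -> R) (i : nat) : R :=
  match i with
  | O => 0
  | S j => argmin_min (Gfun mu sigma q Lambda (Wz mu sigma q Lambda c j) (c (S j)))
  end.

From Stdlib Require Import Reals Lra Lia Classical.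
From Coquelicot Require Import Coquelicot.
Open Scope R_scope.

(* W(., c_i) is W(., c_(i-1)) =: Wp glued at z = z*(c_i) to the exponential
   curve g y = K (1 - a e^(th y)), K = (c_i + Lambda)/q, a = G_i z.  Since
   K e^(th y) G_i y = K - Wp y, the gap Wp - g equals K e^(th y) (G_i z - G_i y):
   it is <= 0 on [0, oo) and vanishes at z.  For z > 0 this is an interior
   maximum, so the gap has zero derivative at z (smooth fit, hence C^1) and
   nonpositive left second derivative there (the jump inequality).  Every
   W(., c_i) is moreover of the form A + B e^(s y) on a left neighbourhood of
   each point, which makes the left second derivative exist; this invariant is
   carried along the induction on i. *)

Definition aff_exp (A B s y : R) : R := A + B * exp (s * y).

Lemma is_derive_aff_exp A B s y : is_derive (aff_exp A B s) y (aff_exp 0 (B * s) s y).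
Proof. unfold aff_exp. auto_derive; auto. ring. Qed.

Lemma continuous_aff_exp A B s y : continuous (aff_exp A B s) y.
Proof. apply (ex_derive_continuous (aff_exp A B s)). eexists. apply is_derive_aff_exp. Qed.

Lemma locally_open_interval (P : R -> Prop) u v x :
  u < x < v -> (forall t, u < t < v -> P t) -> locally x P.
Proof.
  intros Hx H. apply (locally_interval P x u v); simpl; try lra.
  intros t Hu Hv. apply H; simpl in *; lra.
Qed.

Lemma locally_Derive_ext (f g : R -> R) x :
  locally x (fun t => f t = g t) -> locally x (fun t => Derive f t = Derive g t).
Proof.
  intros H. apply locally_locally in H. eapply filter_imp; [|exact H].
  intros t Ht. apply Derive_ext_loc, Ht.
Qed.

Lemma is_derive_Derive_aff_exp_on (f : R -> R) A B s u v :
  (forall t, u < t < v -> f t = aff_exp A B s t) ->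
  forall x, u < x < v -> is_derive (Derive f) x (aff_exp 0 (B * s * s) s x).
Proof.
  intros E x Hx. apply (is_derive_ext_loc (aff_exp 0 (B * s) s)); [|apply is_derive_aff_exp].
  eapply filter_imp; [|exact (locally_Derive_ext _ _ x (locally_open_interval _ u v x Hx E))].
  intros t Ht. rewrite Ht. symmetry. apply is_derive_unique, is_derive_aff_exp.
Qed.

Definition C1_at (f : R -> R) (x : R) : Prop := ex_derive f x /\ continuous (Derive f) x.

Lemma C1_at_aff_exp A B s x : C1_at (aff_exp A B s) x.
Proof.
  split.
  - eexists. apply is_derive_aff_exp.
  - apply (continuous_ext (aff_exp 0 (B * s) s)); [|apply continuous_aff_exp].
    intros y. symmetry. apply is_derive_unique, is_derive_aff_exp.
Qed.

Lemma C1_at_ext_loc (f g : R -> R) x :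
  locally x (fun t => f t = g t) -> C1_at g x -> C1_at f x.
Proof.
  intros H [Dg Cg].
  assert (H' : locally x (fun t => g t = f t)) by (eapply filter_imp; [|exact H]; auto).
  split.
  - exact (ex_derive_ext_loc g f x H' Dg).
  - exact (continuous_ext_loc _ _ x (locally_Derive_ext g f x H') Cg).
Qed.

Lemma extension_cont_le (f g : R -> R) a x : x <= a -> extension_cont f g a x = f x.
Proof. intros Hx. unfold extension_cont. destruct (Rle_dec x a); [reflexivity|lra]. Qed.

Lemma extension_cont_gt (f g : R -> R) a x : a < x -> extension_cont f g a x = g x.
Proof. intros Hx. unfold extension_cont. destruct (Rle_dec x a); [lra|reflexivity]. Qed.

Lemma extension_cont_left (f g : R -> R) a x :
  x < a -> locally x (fun t => extension_cont f g a t = f t).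
Proof.
  intros Hx. apply (locally_open_interval _ (x - 1) a); [lra|].
  intros t Ht. apply extension_cont_le. lra.
Qed.

Lemma extension_cont_right (f g : R -> R) a x :
  a < x -> locally x (fun t => extension_cont f g a t = g t).
Proof.
  intros Hx. apply (locally_open_interval _ a (x + 1)); [lra|].
  intros t Ht. apply extension_cont_gt. lra.
Qed.

Lemma Derive_extension_cont (f g : R -> R) a :
  ex_derive f a -> ex_derive g a -> f a = g a -> Derive f a = Derive g a ->
  forall x, Derive (extension_cont f g a) x = extension_cont (Derive f) (Derive g) a x.
Proof.
  intros Df Dg Ea Ea' x. destruct (Rtotal_order x a) as [Hx|[->|Hx]].
  - rewrite extension_cont_le by lra.
    exact (locally_singleton _ _ (locally_Derive_ext _ _ x (extension_cont_left f g a x Hx))).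
  - rewrite extension_cont_le by lra.
    apply is_derive_unique, extension_cont_is_derive; [apply Derive_correct, Df| |exact Ea].
    rewrite Ea'. apply Derive_correct, Dg.
  - rewrite extension_cont_gt by lra.
    exact (locally_singleton _ _ (locally_Derive_ext _ _ x (extension_cont_right f g a x Hx))).
Qed.

Lemma C1_at_extension_cont (f g : R -> R) a :
  C1_at f a -> C1_at g a -> f a = g a -> Derive f a = Derive g a ->
  C1_at (extension_cont f g a) a.
Proof.
  intros [Df Cf] [Dg Cg] Ea Ea'. split.
  - exists (Derive f a). apply extension_cont_is_derive; [apply Derive_correct, Df| |exact Ea].
    rewrite Ea'. apply Derive_correct, Dg.
  - apply (continuous_ext (extension_cont (Derive f) (Derive g) a)).
    + intros x. symmetry. apply Derive_extension_cont; assumption.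
    + apply extension_cont_continuous; assumption.
Qed.

Lemma is_derive_left_unique (f h : R -> R) z d l l' : 0 < d ->
  (forall y, z - d < y <= z -> f y = h y) -> is_derive f z l -> is_derive h z l' -> l = l'.
Proof.
  intros Hd Efh Df Dh. apply is_derive_Reals in Df, Dh.
  destruct (Req_dec l l') as [|Hne]; [assumption|exfalso].
  assert (He : 0 < Rabs (l - l') / 2) by (apply Rdiv_lt_0_compat; [apply Rabs_pos_lt|]; lra).
  destruct (Df _ He) as [d1 K1]. destruct (Dh _ He) as [d2 K2].
  set (k := - Rmin d (Rmin d1 d2) / 2).
  assert (Hk : - Rmin d (Rmin d1 d2) < k < 0).
  { pose proof (cond_pos d1). pose proof (cond_pos d2). unfold k.
    assert (0 < Rmin d (Rmin d1 d2)) by (repeat apply Rmin_pos; assumption). lra. }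
  pose proof (Rmin_l d (Rmin d1 d2)). pose proof (Rmin_r d (Rmin d1 d2)).
  pose proof (Rmin_l d1 d2). pose proof (Rmin_r d1 d2).
  assert (Hq1 := K1 k ltac:(apply Rlt_not_eq; lra) ltac:(apply Rabs_def1; lra)).
  assert (Hq2 := K2 k ltac:(apply Rlt_not_eq; lra) ltac:(apply Rabs_def1; lra)).
  rewrite !Efh in Hq1 by lra.
  assert (Rabs (l - l') <= Rabs ((h (z + k) - h z) / k - l') + Rabs ((h (z + k) - h z) / k - l)).
  { replace (l - l') with (((h (z + k) - h z) / k - l') - ((h (z + k) - h z) / k - l)) by ring.
    eapply Rle_trans; [apply Rabs_triang|]. rewrite Rabs_Ropp. lra. }
  lra.
Qed.

Lemma second_derivative_nonpos_at_left_max (f f1 f2 : R -> R) z d : 0 < d ->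
  (forall y, is_derive f y (f1 y)) -> (forall y, is_derive f1 y (f2 y)) ->
  continuous f2 z -> f1 z = 0 -> (forall y, z - d < y < z -> f y <= f z) -> f2 z <= 0.
Proof.
  intros Hd D1 D2 C2 Z Hmax. apply Rnot_lt_le. intros Hpos.
  assert (Hloc : locally z (fun y => 0 < f2 y)).
  { apply C2. apply (locally_open_interval _ 0 (f2 z + 1)); [lra|]. intros; lra. }
  destruct Hloc as [eps Heps].
  pose proof (cond_pos eps). pose proof (Rmin_l d eps). pose proof (Rmin_r d eps).
  assert (0 < Rmin d eps) by (apply Rmin_pos; assumption).
  set (y := z - Rmin d eps / 2).
  destruct (MVT_cor2 f f1 y z) as [xi [Ef Hxi]];
    [unfold y; lra|intros; apply is_derive_Reals, D1|].
  destruct (MVT_cor2 f1 f2 xi z) as [eta [Ef1 Heta]];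
    [lra|intros; apply is_derive_Reals, D2|].
  assert (Hf2 : 0 < f2 eta).
  { apply Heps. change (Rabs (eta - z) < eps). apply Rabs_def1; unfold y in *; lra. }
  assert (f1 xi < 0) by (rewrite Z in Ef1; nra).
  assert (f y <= f z) by (apply Hmax; unfold y; lra).
  nra.
Qed.

Lemma filterlim_at_left_ext (f h : R -> R) z d : 0 < d ->
  (forall t, z - d < t < z -> f t = h t) -> continuous h z ->
  filterlim f (at_left z) (locally (h z)).
Proof.
  intros Hd E C. apply (filterlim_ext_loc h).
  - apply (locally_open_interval _ (z - d) (z + d)); [lra|].
    intros t Ht Hlt. symmetry. apply E. lra.
  - exact (filterlim_filter_le_1 _ (filter_le_within (F := locally z) _) C).
Qed.

Lemma filterlim_at_right_ext (f h : R -> R) z d : 0 < d ->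
  (forall t, z < t < z + d -> f t = h t) -> continuous h z ->
  filterlim f (at_right z) (locally (h z)).
Proof.
  intros Hd E C. apply (filterlim_ext_loc h).
  - apply (locally_open_interval _ (z - d) (z + d)); [lra|].
    intros t Ht Hlt. symmetry. apply E. lra.
  - exact (filterlim_filter_le_1 _ (filter_le_within (F := locally z) _) C).
Qed.

Lemma argmin_min_minimizes (G : R -> R) :
  0 < argmin_min G -> continuous G (argmin_min G) ->
  forall y, 0 <= y -> G (argmin_min G) <= G y.
Proof.
  unfold argmin_min. destruct (Glb_Rbar_correct (argmin_set G)) as [Hlb Hglb].
  destruct (Glb_Rbar (argmin_set G)) as [z| |]; simpl; try lra.
  intros Hz C y Hy. apply Rnot_lt_le. intros Hlt.
  assert (Hloc : locally z (fun t => G y < G t)).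
  { apply C. apply (locally_open_interval _ (G y) (G z + 1)); [lra|]. intros; lra. }
  destruct Hloc as [eps Heps].
  destruct (classic (exists w, argmin_set G w /\ w < z + eps)) as [[w [Hw Hwz]]|Hnone].
  - pose proof (Hlb w Hw) as Hzw. simpl in Hzw. destruct Hw as [_ Hwmin].
    assert (G y < G w) by (apply Heps; change (Rabs (w - z) < eps); apply Rabs_def1; lra).
    specialize (Hwmin y Hy). lra.
  - assert (Hle : Rbar_le (z + eps) z).
    { apply Hglb. intros w Hw. simpl. apply Rnot_lt_le. intros Hw'. apply Hnone. exists w. auto. }
    simpl in Hle. pose proof (cond_pos eps). lra.
Qed.

Definition left_exp_at (f : R -> R) (x : R) : Prop :=
  exists d A B s, 0 < d /\ forall y, x - d < y <= x -> f y = aff_exp A B s y.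

Definition pw_exp_C1 (W : R -> R) : Prop :=
  forall x, 0 < x -> C1_at W x /\ left_exp_at W x.

Section Threshold.

Variables (mu sigma q Lambda ci : R) (Wp : R -> R).
Hypotheses (q_pos : 0 < q) (ciL_pos : 0 < ci + Lambda) (Wp_pw : pw_exp_C1 Wp).

Let K := (ci + Lambda) / q.
Let th := theta1 mu sigma q ci.
Let G := Gfun mu sigma q Lambda Wp ci.
Let z := argmin_min G.
Let g := fun y => K * (1 - G z * exp (th * y)).
Let W := extension_cont Wp g z.

Lemma g_aff_exp y : g y = aff_exp K (- (K * G z)) th y.
Proof. unfold g, aff_exp. ring. Qed.

Lemma is_derive_g y : is_derive g y (aff_exp 0 (- (K * G z) * th) th y).
Proof.
  apply (is_derive_ext (aff_exp K (- (K * G z)) th)); [|apply is_derive_aff_exp].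
  intros t. symmetry. apply g_aff_exp.
Qed.

Lemma C1_at_g x : C1_at g x.
Proof.
  apply (C1_at_ext_loc g (aff_exp K (- (K * G z)) th)); [|apply C1_at_aff_exp].
  apply filter_forall, g_aff_exp.
Qed.

Lemma Wp_sub_g y : Wp y - g y = K * exp (th * y) * (G z - G y).
Proof.
  assert (Kr : K * (q / (ci + Lambda)) = 1) by (unfold K; field; lra).
  assert (Ee : exp (th * y) * exp (- th * y) = 1).
  { rewrite <- exp_plus. replace (th * y + - th * y) with 0 by ring. apply exp_0. }
  change (G y) with ((1 - q / (ci + Lambda) * Wp y) * exp (- th * y)).
  replace (K * exp (th * y) * (G z - (1 - q / (ci + Lambda) * Wp y) * exp (- th * y)))
    with (K * exp (th * y) * G z - K * (exp (th * y) * exp (- th * y))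
          + K * (q / (ci + Lambda)) * Wp y * (exp (th * y) * exp (- th * y))) by ring.
  rewrite Ee, Kr. unfold g. ring.
Qed.

Lemma K_pos : 0 < K.
Proof. unfold K. apply Rdiv_lt_0_compat; lra. Qed.

Lemma g_at_z : g z = Wp z.
Proof. pose proof (Wp_sub_g z). rewrite Rminus_diag, Rmult_0_r in H. lra. Qed.

Lemma Wp_le_g : 0 < z -> forall y, 0 <= y -> Wp y <= g y.
Proof.
  intros Hz y Hy.
  assert (CG : continuous G z).
  { apply (ex_derive_continuous G). unfold G, Gfun. auto_derive. apply (Wp_pw z Hz). }
  assert (Hmin : G z <= G y) by exact (argmin_min_minimizes G Hz CG y Hy).
  pose proof (Wp_sub_g y). pose proof K_pos. pose proof (exp_pos (th * y)).
  assert (0 <= K * exp (th * y) * (G y - G z)) by (apply Rmult_le_pos; [apply Rmult_le_pos|]; lra).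
  lra.
Qed.

Lemma smooth_fit : 0 < z -> Derive Wp z = Derive g z.
Proof.
  intros Hz.
  assert (Dgap : ex_derive (fun y => Wp y - g y) z).
  { exact (ex_derive_minus Wp g z (proj1 (proj1 (Wp_pw z Hz))) (proj1 (C1_at_g z))). }
  pose proof (deriv_maximum (fun y => Wp y - g y) 0 (z + 1) z (ex_derive_Reals_0 _ _ Dgap)) as Hmax.
  rewrite Derive_Reals, Derive_minus in Hmax by (try apply (Wp_pw z Hz); apply C1_at_g).
  assert (Derive Wp z - Derive g z = 0); [|lra].
  apply Hmax; try lra. intros y Hy _. rewrite g_at_z, Rminus_diag.
  pose proof (Wp_le_g Hz y ltac:(lra)). lra.
Qed.

Lemma W_pw_exp_C1 : pw_exp_C1 W.
Proof.
  intros x Hx. split.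
  - destruct (Rtotal_order x z) as [Hlt|[->|Hgt]].
    + exact (C1_at_ext_loc _ _ x (extension_cont_left Wp g z x Hlt) (proj1 (Wp_pw x Hx))).
    + apply C1_at_extension_cont; [apply (Wp_pw z Hx)|apply C1_at_g|symmetry; apply g_at_z|].
      apply smooth_fit, Hx.
    + exact (C1_at_ext_loc _ _ x (extension_cont_right Wp g z x Hgt) (C1_at_g x)).
  - destruct (Rle_lt_dec x z) as [Hle|Hgt].
    + destruct (proj2 (Wp_pw x Hx)) as (d & A & B & s & Hd & Hexp).
      exists d, A, B, s. split; [exact Hd|]. intros y Hy.
      rewrite <- Hexp by exact Hy. apply extension_cont_le. lra.
    + exists (x - z), K, (- (K * G z)), th. split; [lra|]. intros y Hy.
      rewrite <- g_aff_exp. apply extension_cont_gt. lra.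
Qed.

(* [aff_exp A B s - g] is smooth and agrees with the gap [Wp - g] left of [z],
   where the gap is maximal. *)
Lemma left_second_derivative_le d A B s : 0 < z -> 0 < d ->
  (forall y, z - d < y <= z -> Wp y = aff_exp A B s y) ->
  aff_exp 0 (B * s * s) s z <= aff_exp 0 (- (K * G z) * th * th) th z.
Proof.
  intros Hz Hd Hexp.
  assert (DWp : Derive Wp z = aff_exp 0 (B * s) s z).
  { apply (is_derive_left_unique Wp (aff_exp A B s) z d _ _ Hd Hexp); [|apply is_derive_aff_exp].
    apply Derive_correct, (Wp_pw z Hz). }
  assert (Dg : Derive g z = aff_exp 0 (- (K * G z) * th) th z).
  { apply is_derive_unique, is_derive_g. }
  pose proof (Rmin_l d z). pose proof (Rmin_r d z).
  enough (Hneg : aff_exp 0 (B * s * s) s z - aff_exp 0 (- (K * G z) * th * th) th z <= 0) by lra.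
  apply (second_derivative_nonpos_at_left_max (fun y => aff_exp A B s y - g y)
    (fun y => aff_exp 0 (B * s) s y - aff_exp 0 (- (K * G z) * th) th y)
    (fun y => aff_exp 0 (B * s * s) s y - aff_exp 0 (- (K * G z) * th * th) th y)
    z (Rmin d z) ltac:(apply Rmin_pos; assumption)).
  - intros y. exact (is_derive_minus _ _ y _ _ (is_derive_aff_exp A B s y) (is_derive_g y)).
  - intros y.
    exact (is_derive_minus _ _ y _ _ (is_derive_aff_exp _ _ _ y) (is_derive_aff_exp _ _ _ y)).
  - apply (ex_derive_continuous
      (fun y => aff_exp 0 (B * s * s) s y - aff_exp 0 (- (K * G z) * th * th) th y)).
    eexists.
    exact (is_derive_minus _ _ z _ _ (is_derive_aff_exp _ _ _ z) (is_derive_aff_exp _ _ _ z)).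
  - rewrite <- DWp, <- Dg, smooth_fit by exact Hz. ring.
  - intros y Hy. rewrite <- (Hexp y), <- (Hexp z) by lra.
    rewrite g_at_z, Rminus_diag. pose proof (Wp_le_g Hz y ltac:(lra)). lra.
Qed.

Lemma W_second_derivative_jump : 0 < z ->
  exists lminus lplus : R,
    (exists del : posreal, forall x, z - del < x < z -> ex_derive (Derive W) x) /\
    (exists del : posreal, forall x, z < x < z + del -> ex_derive (Derive W) x) /\
    filterlim (fun x => Derive (Derive W) x) (at_left z) (locally lminus) /\
    filterlim (fun x => Derive (Derive W) x) (at_right z) (locally lplus) /\
    lminus <= lplus.
Proof.
  intros Hz. destruct (proj2 (Wp_pw z Hz)) as (d & A & B & s & Hd & Hexp).
  assert (Wleft : forall t, z - d < t < z -> W t = aff_exp A B s t).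
  { intros t Ht. rewrite <- Hexp by lra. apply extension_cont_le. lra. }
  assert (Wright : forall t, z < t < z + 1 -> W t = aff_exp K (- (K * G z)) th t).
  { intros t Ht. rewrite <- g_aff_exp. apply extension_cont_gt. lra. }
  pose proof (is_derive_Derive_aff_exp_on W _ _ _ _ _ Wleft) as DDleft.
  pose proof (is_derive_Derive_aff_exp_on W _ _ _ _ _ Wright) as DDright.
  exists (aff_exp 0 (B * s * s) s z), (aff_exp 0 (- (K * G z) * th * th) th z).
  split; [|split; [|split; [|split]]].
  - exists (mkposreal d Hd). intros x Hx. eexists. apply DDleft, Hx.
  - exists (mkposreal 1 Rlt_0_1). intros x Hx. eexists. apply DDright, Hx.
  - apply (filterlim_at_left_ext _ _ z d Hd); [|apply continuous_aff_exp].
    intros t Ht. apply is_derive_unique, DDleft, Ht.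
  - apply (filterlim_at_right_ext _ _ z 1 Rlt_0_1); [|apply continuous_aff_exp].
    intros t Ht. apply is_derive_unique, DDright, Ht.
  - exact (left_second_derivative_le d A B s Hz Hd Hexp).
Qed.

End Threshold.

Lemma Wz0_pw_exp_C1 mu sigma q Lambda c : pw_exp_C1 (Wz mu sigma q Lambda c 0).
Proof.
  set (t := theta1 mu sigma q 0).
  assert (E : forall y, Wz mu sigma q Lambda c 0 y = aff_exp (Lambda / q) (- (Lambda / q)) t y).
  { intros y. change (Lambda / q * (1 - exp (t * y)) = aff_exp (Lambda / q) (- (Lambda / q)) t y).
    unfold aff_exp. ring. }
  intros x Hx. split.
  - apply (C1_at_ext_loc _ _ x (filter_forall _ E)), C1_at_aff_exp.
  - exists 1, (Lambda / q), (- (Lambda / q)), t. split; [lra|]. intros y _. apply E.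
Qed.

Theorem mainTheorem13 (mu sigma q Lambda : R) (n : nat) (c : nat -> R) :
  0 < sigma -> 0 < q -> 0 < Lambda ->
  c 0%nat = 0 -> (forall k, (k < n)%nat -> c k < c (S k)) ->
  forall i : nat, (1 <= i <= n)%nat ->
    let W := Wz mu sigma q Lambda c i in
    let z := zstar mu sigma q Lambda c i in
    (forall x, 0 < x -> ex_derive W x /\ continuous (Derive W) x) /\
    (0 < z ->
      exists lminus lplus : R,
        (exists del : posreal, forall x, z - del < x < z -> ex_derive (Derive W) x) /\
        (exists del : posreal, forall x, z < x < z + del -> ex_derive (Derive W) x) /\
        filterlim (fun x => Derive (Derive W) x) (at_left z) (locally lminus) /\
        filterlim (fun x => Derive (Derive W) x) (at_right z) (locally lplus) /\
        lminus <= lplus).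
Proof.
  intros _ Hq HL Hc0 Hc i Hi W z.
  assert (Hcnn : forall k, (k <= n)%nat -> 0 <= c k).
  { induction k as [|k IH]; intros Hk; [lra|].
    pose proof (Hc k ltac:(lia)). pose proof (IH ltac:(lia)). lra. }
  assert (Hpw : forall k, (k <= n)%nat -> pw_exp_C1 (Wz mu sigma q Lambda c k)).
  { induction k as [|k IH]; intros Hk; [apply Wz0_pw_exp_C1|].
    pose proof (Hcnn (S k) Hk).
    exact (W_pw_exp_C1 mu sigma q Lambda (c (S k)) _ Hq ltac:(lra) (IH ltac:(lia))). }
  destruct i as [|j]; [lia|].
  pose proof (Hcnn (S j) (proj2 Hi)).
  split.
  - intros x Hx. exact (proj1 (Hpw (S j) (proj2 Hi) x Hx)).
  - exact (W_second_derivative_jump mu sigma q Lambda (c (S j)) _ Hq ltac:(lra) (Hpw j ltac:(lia))).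
Qed.
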